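(* For any $\mathcal{L}^S$-theory $\Gamma$, $\Gamma+\Sigma_1$ is consistent if and only if $\Gamma+\Sigma_1^*$ is consistent.
   Context: $\mathcal{L}$ is a countable first-order language containing a binary relation symbol $<$; $\mathcal{L}^S$ is $\mathcal{L}$ expanded by Skolem function symbols and $T_{\mathrm{skolem}}$ the $\mathcal{L}^S$-theory asserting they are Skolem functions. $\lambda$ is a singular cardinal, $\eta=\mathrm{cf}(\lambda)$, $\langle\mu_i;i<\eta\rangle$ an increasing sequence of cardinals with limit $\lambda$, $C=\{c_{ij}\mid i<\eta,j<\mu_i\}$ and $C^*=\{c_{ij}\mid i,j<\omega\}$ are sets of new constant symbols. For a set $D$ of doubly indexed constants, the theory $\Sigma_1$ over $D$ consists of the following sentences, where ''term'' means $\mathcal{L}^S$-term and in every expression $\tau(c_{m_1n_1},\dots,c_{m_kn_k})$ the constants are strictly increasing in the lexicographic order of index pairs, all constants ranging over $D$: (i) $T_{\mathrm{skolem}}$ plus axioms that $<$ is a linear order; (ii) $c_{ij}<c_{kl}$ iff $(i,j)<(k,l)$ lexicographically; (iii) $\tau(c_{i_1j_1},\dots,c_{i_nj_n})<c_{ij}$ whenever $i_1,\dots,i_n<i$; (iv) for increasing $c_{i_1j_1},\dots,c_{i_nj_n}$ with $i_n>1$, any $j$, any $u\ge i_n$, any $l_1,\dots,l_{n-q}$: if $\tau(c_{i_1j_1},\dots,c_{i_nj_n})<c_{(i_n-1)j}$ then $\tau(\bar c,c_{i_{q+1}j_{q+1}},\dots,c_{i_nj_n})=\tau(\bar c,c_{ul_1},\dots,c_{ul_{n-q}})$,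 where $q$ is the greatest integer with $i_q\ne i_n$ ($q=0$ if none) and $\bar c=\langle c_{i_1j_1},\dots,c_{i_qj_q}\rangle$. $\Sigma_1$ denotes this theory over $C$ (an $\mathcal{L}^S(C)$-theory), and $\Sigma_1^*$ this theory over $C^*$ (an $\mathcal{L}^S(C^* )$-theory). *)

From Stdlib Require Import List Arith Sorted.
Import ListNotations.

Record lang := {
  Fun : Type;
  Rel : Type;
  far : Fun -> nat;
  rar : Rel -> nat;
  ltRel : Rel;
  ltRel_ar : rar ltRel = 2;
  Fun_countable : exists e : Fun -> nat, forall x y, e x = e y -> x = y;
  Rel_countable : exists e : Rel -> nat, forall x y, e x = e y -> x = y
}.

Inductive tm (Sy : Type) : Type :=
| var (n : nat)
| app (f : Sy) (args : list (tm Sy)).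
Arguments var {Sy} n.
Arguments app {Sy} f args.

Inductive fm (Sy R : Type) : Type :=
| bot
| atom (r : R) (args : list (tm Sy))
| eqf (s t : tm Sy)
| imp (p q : fm Sy R)
| all (p : fm Sy R).
Arguments bot {Sy R}.
Arguments atom {Sy R} r args.
Arguments eqf {Sy R} s t.
Arguments imp {Sy R} p q.
Arguments all {Sy R} p.

Definition neg {Sy R} (p : fm Sy R) : fm Sy R := imp p bot.
Definition ex {Sy R} (p : fm Sy R) : fm Sy R := neg (all (neg p)).
Definition orf {Sy R} (p q : fm Sy R) : fm Sy R := imp (neg p) q.

Fixpoint tmap {Sy Sy'} (g : Sy -> Sy') (t : tm Sy) : tm Sy' :=
  match t with
  | var n => var n
  | app f args => app (g f) (map (tmap g) args)
  end.

Fixpoint fmap {Sy Sy' R} (g : Sy -> Sy') (p : fm Sy R) : fm Sy' R :=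
  match p with
  | bot => bot
  | atom r args => atom r (map (tmap g) args)
  | eqf s t => eqf (tmap g s) (tmap g t)
  | imp p q => imp (fmap g p) (fmap g q)
  | all p => all (fmap g p)
  end.

Fixpoint tsubst {Sy} (s : nat -> tm Sy) (t : tm Sy) : tm Sy :=
  match t with
  | var n => s n
  | app f args => app f (map (tsubst s) args)
  end.

Definition up {Sy} (s : nat -> tm Sy) : nat -> tm Sy :=
  fun n => match n with 0 => var 0 | S m => tsubst (fun k => var (S k)) (s m) end.

Fixpoint fsubst {Sy R} (s : nat -> tm Sy) (p : fm Sy R) : fm Sy R :=
  match p with
  | bot => bot
  | atom r args => atom r (map (tsubst s) args)
  | eqf a b => eqf (tsubst s a) (tsubst s b)
  | imp p q => imp (fsubst s p) (fsubst s q)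
  | all p => all (fsubst (up s) p)
  end.

Definition shift {Sy} : nat -> tm Sy := fun n => var (S n).
Definition inst1 {Sy} (t : tm Sy) : nat -> tm Sy :=
  fun n => match n with 0 => t | S m => var m end.

(* 1 + the largest free variable (0 if none) *)
Fixpoint tbound {Sy} (t : tm Sy) : nat :=
  match t with
  | var n => S n
  | app _ args => fold_right max 0 (map tbound args)
  end.

Fixpoint fbound {Sy R} (p : fm Sy R) : nat :=
  match p with
  | bot => 0
  | atom _ args => fold_right max 0 (map tbound args)
  | eqf s t => max (tbound s) (tbound t)
  | imp p q => max (fbound p) (fbound q)
  | all p => pred (fbound p)
  end.

Definition sentence {Sy R} (p : fm Sy R) : Prop := fbound p = 0.

Fixpoint twf {Sy} (ar : Sy -> nat) (t : tm Sy) : Prop :=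
  match t with
  | var _ => True
  | app f args => length args = ar f /\
      (fix go (l : list (tm Sy)) : Prop :=
         match l with [] => True | u :: l' => twf ar u /\ go l' end) args
  end.

Fixpoint fwf {Sy R} (ar : Sy -> nat) (rr : R -> nat) (p : fm Sy R) : Prop :=
  match p with
  | bot => True
  | atom r args => length args = rr r /\ Forall (twf ar) args
  | eqf s t => twf ar s /\ twf ar t
  | imp p q => fwf ar rr p /\ fwf ar rr q
  | all p => fwf ar rr p
  end.

Inductive nd {Sy R} : list (fm Sy R) -> fm Sy R -> Prop :=
| ndAx A p : In p A -> nd A p
| ndImpI A p q : nd (p :: A) q -> nd A (imp p q)
| ndImpE A p q : nd A (imp p q) -> nd A p -> nd A q
| ndAllI A p : nd (map (fsubst shift) A) p -> nd A (all p)
| ndAllE A p t : nd A (all p) -> nd A (fsubst (inst1 t) p)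
| ndRAA A p : nd (neg p :: A) bot -> nd A p
| ndRefl A t : nd A (eqf t t)
| ndEqE A p s t : nd A (eqf s t) -> nd A (fsubst (inst1 s) p) ->
                  nd A (fsubst (inst1 t) p).

Definition consistent {Sy R} (T : fm Sy R -> Prop) : Prop :=
  ~ exists A : list (fm Sy R), (forall p, In p A -> T p) /\ nd A bot.

(* The Skolem expansion L^S: one new function symbol f_phi for every
   L^S-formula phi; variable 0 of phi is the witnessed variable and
   the variables 1..k are the parameters, k = fbound phi - 1. *)

Inductive ssym (L : lang) : Type :=
| Base (f : Fun L)
| Sk (phi : fm (ssym L) (Rel L)).
Arguments Base {L} f.
Arguments Sk {L} phi.

Definition sarity {L : lang} (s : ssym L) : nat :=
  match s with Base f => far L f | Sk phi => pred (fbound phi) end.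

Definition LSfm (L : lang) := fm (ssym L) (Rel L).
Definition LSterm (L : lang) := tm (ssym L).

Definition LS_theory {L : lang} (G : LSfm L -> Prop) : Prop :=
  forall p, G p -> sentence p /\ fwf sarity (rar L) p.

Definition symK (L : lang) (K : Type) := (ssym L + K)%type.
Definition LSKfm (L : lang) (K : Type) := fm (symK L K) (Rel L).
Definition LSKterm (L : lang) (K : Type) := tm (symK L K).

Definition emb {L K} (p : LSfm L) : LSKfm L K := fmap inl p.
Definition embt {L K} (t : LSterm L) : LSKterm L K := tmap inl t.
Definition cst {L K} (k : K) : LSKterm L K := app (inr k) [].

Fixpoint alln {Sy R} (n : nat) (p : fm Sy R) : fm Sy R :=
  match n with 0 => p | S m => all (alln m p) end.

Definition skolem_axiom {L : lang} (phi : LSfm L) : LSfm L :=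
  let k := pred (fbound phi) in
  alln k (imp (ex phi)
    (fsubst (fun n => match n with
                      | 0 => app (Sk phi) (map var (seq 0 k))
                      | S m => var m end) phi)).

Definition T_skolem {L : lang} (p : LSfm L) : Prop :=
  exists phi, p = skolem_axiom phi.

Definition ltf {L : lang} {Sy} (s t : tm Sy) : fm Sy (Rel L) := atom (ltRel L) [s; t].

Definition linord_axioms {L : lang} (p : LSfm L) : Prop :=
  p = all (neg (ltf (L:=L) (var 0) (var 0))) \/
  p = all (all (all (imp (ltf (L:=L) (var 2) (var 1))
                     (imp (ltf (L:=L) (var 1) (var 0)) (ltf (L:=L) (var 2) (var 0)))))) \/
  p = all (all (orf (ltf (L:=L) (var 1) (var 0))
                    (orf (eqf (var 1) (var 0)) (ltf (L:=L) (var 0) (var 1))))).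

(* Doubly indexed constants c_{ij}: i ranges over a well-ordered type
   Row (the ordinal eta, or omega), j over Col i (the cardinal mu_i, or omega). *)

Section Sigma1.
Variable L : lang.
Variable Row : Type.
Variable ltR : Row -> Row -> Prop.
Variable Col : Row -> Type.
Variable ltC : forall i, Col i -> Col i -> Prop.

Definition Cidx := {i : Row & Col i}.

Definition lex (a b : Cidx) : Prop :=
  ltR (projT1 a) (projT1 b) \/
  exists i x y, ltC i x y /\ a = existT _ i x /\ b = existT _ i y.

(* tau(c_{k_0}, ..., c_{k_{n-1}}): variable m of tau is replaced by c_{k_m} *)
Definition instc (ks : list Cidx) (tau : LSterm L) : LSKterm L Cidx :=
  tsubst (fun m => match nth_error ks m with
                   | Some k => cst k
                   | None => var m end) (embt tau).

(* "i > 1" for an ordinal i: there are at least two ordinals below i *)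
Definition gt1 (i : Row) : Prop := exists a b, ltR a b /\ ltR b i.
(* p = i - 1, i.e. i is the successor of p *)
Definition is_pred (p i : Row) : Prop := ltR p i /\ forall x, ~ (ltR p x /\ ltR x i).

Definition Sigma1 (phi : LSKfm L Cidx) : Prop :=
  (exists p, (T_skolem p \/ linord_axioms p) /\ phi = emb p) \/
  (exists a b,
      (lex a b /\ phi = ltf (L:=L) (cst a) (cst b)) \/
      (~ lex a b /\ phi = neg (ltf (L:=L) (cst a) (cst b)))) \/
  (exists (tau : LSterm L) (ks : list Cidx) (i : Row) (j : Col i),
      ks <> [] /\ Sorted lex ks /\ tbound tau <= length ks /\
      (forall k, In k ks -> ltR (projT1 k) i) /\
      phi = ltf (L:=L) (instc ks tau) (cst (existT _ i j))) \/
  (exists (tau : LSterm L) (pre post : list Cidx) (iN p : Row) (j : Col p)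
          (u : Row) (ls : list (Col u)),
      post <> [] /\ Sorted lex (pre ++ post) /\
      tbound tau <= length (pre ++ post) /\
      (forall k, In k post -> projT1 k = iN) /\
      (forall k, In k pre -> projT1 k <> iN) /\
      gt1 iN /\ is_pred p iN /\ (ltR iN u \/ u = iN) /\
      length ls = length post /\
      Sorted lex (pre ++ map (fun l => existT _ u l) ls) /\
      phi = imp (ltf (L:=L) (instc (pre ++ post) tau) (cst (existT _ p j)))
                (eqf (instc (pre ++ post) tau)
                     (instc (pre ++ map (fun l => existT _ u l) ls) tau))).
End Sigma1.

Arguments Sigma1 L {Row} ltR {Col} ltC phi.

Definition plus_theory {L K} (G : LSfm L -> Prop) (Sig : LSKfm L K -> Prop)
  : LSKfm L K -> Prop :=
  fun phi => (exists p, G p /\ phi = emb p) \/ Sig phi.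

Definition Sigma1_star (L : lang) := Sigma1 L lt (Col := fun _ : nat => nat) (fun _ => lt).

Definition inj (A B : Type) : Prop := exists f : A -> B, forall x y, f x = f y -> x = y.
Definition equinum (A B : Type) : Prop :=
  exists f : A -> B, (forall x y, f x = f y -> x = y) /\ (forall y, exists x, f x = y).
Definition card_lt (A B : Type) : Prop := inj A B /\ ~ inj B A.

Definition well_order {A} (lt : A -> A -> Prop) : Prop :=
  (forall x, ~ lt x x) /\ (forall x y z, lt x y -> lt y z -> lt x z) /\
  (forall x y, lt x y \/ x = y \/ lt y x) /\ well_founded lt.

(* a cardinal = an initial ordinal *)
Definition is_cardinal {A} (lt : A -> A -> Prop) : Prop :=
  well_order lt /\ forall a : A, ~ equinum A {x : A | lt x a}.

Definition cofinal {A} (lt : A -> A -> Prop) (P : A -> Prop) : Prop :=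
  forall y, exists x, P x /\ (lt y x \/ y = x).

Definition is_cofinality {E Lam} (ltE : E -> E -> Prop) (ltL : Lam -> Lam -> Prop) : Prop :=
  is_cardinal ltE /\
  (exists h : E -> Lam, cofinal ltL (fun y => exists e, h e = y)) /\
  (forall P : Lam -> Prop, cofinal ltL P -> inj E {y : Lam | P y}).

Definition singular_cardinal {Lam} (ltL : Lam -> Lam -> Prop) {E} (ltE : E -> E -> Prop) :=
  is_cardinal ltL /\ inj nat Lam /\ is_cofinality ltE ltL /\ card_lt E Lam.

Definition increasing_seq_with_limit {E} (ltE : E -> E -> Prop) (M : E -> Type)
  (ltM : forall i, M i -> M i -> Prop) (Lam : Type) : Prop :=
  (forall i, is_cardinal (ltM i)) /\
  (forall i i', ltE i i' -> card_lt (M i) (M i')) /\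
  (forall i, inj (M i) Lam) /\
  (forall X : Type, (forall i, inj (M i) X) -> inj Lam X).

(* A refutation uses finitely many axioms, and these mention finitely many
   constants c_ij.  All that Sigma_1 says about the indices is the order of the
   rows, the order of the columns within a row, which row immediately precedes
   which, and which rows are > 1.  So a finite part of either theory becomes a
   finite part of the other under a renaming of constants along a map of
   finitely many indices preserving these relations, and renaming symbols
   preserves derivations.  From eta to omega, send a row to 2 plus the number
   of smaller rows of the support, and a column to its rank among the support
   columns of its row.  Conversely, eta = cf(lambda) is infinite because
   lambda has no largest element, so its first omega elements form a chain of
   immediate successors; since the mu_i increase strictly, the n-th of them
   carries a cardinal with at least n elements, which leaves room for any
   finite set of columns once the rows are shifted far enough. *)

From Stdlib Require Import List Arith Lia Sorted Classical ClassicalEpsilon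
  FunctionalExtensionality FinFun Eqdep ProofIrrelevance.
Import ListNotations.

(** * Renaming function symbols preserves derivability *)

Fixpoint tm_nested_ind {Sy} (P : tm Sy -> Prop) (Hv : forall n, P (var n))
  (Ha : forall f args, Forall P args -> P (app f args)) (t : tm Sy) : P t :=
  match t with
  | var n => Hv n
  | app f args => Ha f args
     ((fix go (l : list (tm Sy)) : Forall P l :=
        match l with
        | [] => Forall_nil _
        | u :: l' => Forall_cons _ (tm_nested_ind P Hv Ha u) (go l')
        end) args)
  end.

Lemma tmap_tmap {A B C} (g : B -> C) (h : A -> B) t :
  tmap g (tmap h t) = tmap (fun x => g (h x)) t.
Proof.
  induction t using tm_nested_ind; simpl; auto.
  f_equal. rewrite map_map. induction H; simpl; congruence.
Qed.

Lemma tmap_tsubst {A B} (g : A -> B) s t :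
  tmap g (tsubst s t) = tsubst (fun n => tmap g (s n)) (tmap g t).
Proof.
  induction t using tm_nested_ind; simpl; auto.
  f_equal. rewrite !map_map. induction H; simpl; congruence.
Qed.

Lemma fmap_fmap {A B C R} (g : B -> C) (h : A -> B) (p : fm A R) :
  fmap g (fmap h p) = fmap (fun x => g (h x)) p.
Proof.
  induction p; simpl; rewrite ?tmap_tmap; congruence || f_equal.
  rewrite map_map. apply map_ext. intros; apply tmap_tmap.
Qed.

Lemma fmap_fsubst {A B R} (g : A -> B) (sg : nat -> tm A) (p : fm A R) :
  fmap g (fsubst sg p) = fsubst (fun n => tmap g (sg n)) (fmap g p).
Proof.
  revert sg; induction p as [| | |p IHp q IHq|p IHp]; intros sg; simpl;
    rewrite ?tmap_tsubst, ?IHp, ?IHq; auto.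
  - f_equal. rewrite !map_map. apply map_ext. intros; apply tmap_tsubst.
  - do 3 f_equal. apply functional_extensionality. intros [|n]; simpl; auto.
    rewrite tmap_tsubst. reflexivity.
Qed.

Lemma tmap_inst1 {A B} (g : A -> B) (t : tm A) :
  (fun n => tmap g (inst1 t n)) = inst1 (tmap g t).
Proof. apply functional_extensionality; intros [|n]; reflexivity. Qed.

Lemma nd_fmap {A B R} (g : A -> B) (G : list (fm A R)) p :
  nd G p -> nd (map (fmap g) G) (fmap g p).
Proof.
  induction 1; simpl in *; try rewrite fmap_fsubst, tmap_inst1.
  - apply ndAx, in_map; auto.
  - apply ndImpI; auto.
  - eapply ndImpE; eauto.
  - apply ndAllI. rewrite map_map in *.
    erewrite map_ext; [exact IHnd|]. intros q; cbv beta. rewrite fmap_fsubst. reflexivity.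
  - apply ndAllE; auto.
  - apply ndRAA; auto.
  - apply ndRefl.
  - rewrite fmap_fsubst, tmap_inst1 in IHnd2. eapply ndEqE; eauto.
Qed.

Lemma consistent_of_finite_renaming {A B R} (T1 : fm A R -> Prop) (T2 : fm B R -> Prop) :
  (forall l, (forall p, In p l -> T1 p) ->
     exists g : A -> B, forall p, In p l -> T2 (fmap g p)) ->
  consistent T2 -> consistent T1.
Proof.
  intros H C [l [Hl Hnd]]. destruct (H l Hl) as [g Hg]. apply C.
  exists (map (fmap g) l). split.
  - intros p Hp. apply in_map_iff in Hp. destruct Hp as [q [<- Hq]]. auto.
  - exact (nd_fmap g _ _ Hnd).
Qed.

Section Lex.
Variables (R : Type) (ltR : R -> R -> Prop) (C : R -> Type) (ltC : forall i, C i -> C i -> Prop).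

Lemma lex_same (irr : forall x, ~ ltR x x) i x y :
  lex R ltR C ltC (existT _ i x) (existT _ i y) <-> ltC i x y.
Proof.
  split.
  - intros [H|(i' & x' & y' & Hl & E1 & E2)]; simpl in *.
    + exfalso; eapply irr; eauto.
    + injection E1 as <- E1. apply inj_pair2 in E1. apply inj_pair2 in E2. congruence.
  - intros H. right. exists i, x, y. auto.
Qed.

Lemma lex_diff a b : projT1 a <> projT1 b ->
  (lex R ltR C ltC a b <-> ltR (projT1 a) (projT1 b)).
Proof.
  intros Hd. split.
  - intros [H|(i & x & y & Hl & -> & ->)]; auto. contradiction.
  - intros H; left; auto.
Qed.
End Lex.

Section WellOrder.
Variables (A : Type) (lt : A -> A -> Prop) (Hwo : well_order lt).

Lemma wo_irr x : ~ lt x x. Proof. apply Hwo. Qed.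
Lemma wo_trans x y z : lt x y -> lt y z -> lt x z. Proof. apply Hwo. Qed.
Lemma wo_tri x y : lt x y \/ x = y \/ lt y x. Proof. apply Hwo. Qed.
Lemma wo_asym x y : lt x y -> ~ lt y x.
Proof. intros H1 H2. apply (wo_irr x). eapply wo_trans; eauto. Qed.

Lemma wo_exists_least (P : A -> Prop) x : P x -> exists m, P m /\ forall y, P y -> ~ lt y m.
Proof.
  destruct Hwo as [_ [_ [_ wf]]]. revert x.
  intros x; induction x as [x IH] using (well_founded_induction wf). intros Px.
  destruct (classic (exists y, P y /\ lt y x)) as [[y [Py Hy]]|N].
  - apply (IH y Hy Py).
  - exists x. split; auto. intros y Py Hy. apply N; eauto.
Qed.

Lemma wo_exists_max_in_list (l : list A) :
  l <> [] -> exists m, In m l /\ forall z, In z l -> z = m \/ lt z m.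
Proof.
  induction l as [|a l IH]; intros H; [congruence|].
  destruct l as [|b l'].
  - exists a. split; simpl; auto. intros z [->|[]]; auto.
  - destruct IH as [m [Hm Hz]]; [congruence|].
    destruct (wo_tri a m) as [X|[X|X]].
    + exists m. split; [right; auto|]. intros z [<-|Hz']; auto.
    + subst. exists m. split; [left; auto|]. intros z [<-|Hz']; auto.
    + exists a. split; [left; auto|]. intros z [<-|Hz']; auto.
      destruct (Hz z Hz') as [->|Y]; auto. right; eapply wo_trans; eauto.
Qed.

Lemma strict_mono_reflect {B} (ltB : B -> B -> Prop) (P : A -> Prop) (f : A -> B) :
  (forall x, ~ ltB x x) -> (forall x y, ltB x y -> ~ ltB y x) ->
  (forall x y, P x -> P y -> lt x y -> ltB (f x) (f y)) ->
  forall x y, P x -> P y -> (lt x y <-> ltB (f x) (f y)) /\ (f x = f y -> x = y).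
Proof.
  intros irrB asymB Hf x y Px Py. split; [split; [auto|]|].
  - intros H. destruct (wo_tri x y) as [X|[<-|X]]; auto.
    + exfalso; exact (irrB _ H).
    + exfalso; exact (asymB _ _ H (Hf _ _ Py Px X)).
  - intros E. destruct (wo_tri x y) as [X|[X|X]]; auto; exfalso.
    + apply (irrB (f y)). rewrite <- E at 1. auto.
    + apply (irrB (f x)). rewrite E at 1. auto.
Qed.
End WellOrder.

Lemma nat_well_order : well_order Nat.lt.
Proof.
  split; [|split; [|split]]; [intros x; lia|intros x y z; lia|intros x y; lia|apply lt_wf].
Qed.

(** * Relabelling the constants c_ij *)

Section Support.
Variables (L : lang) (R : Type) (ltR : R -> R -> Prop).
Variables (C : R -> Type) (ltC : forall i, C i -> C i -> Prop).

Definition Sigma1_on (SK : Cidx R C -> Prop) (SR : R -> Prop) (phi : LSKfm L (Cidx R C)) : Prop :=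
  (exists p, (T_skolem p \/ linord_axioms p) /\ phi = emb p) \/
  (exists a b, SK a /\ SK b /\
      ((lex R ltR C ltC a b /\ phi = ltf (L:=L) (cst a) (cst b)) \/
      (~ lex R ltR C ltC a b /\ phi = neg (ltf (L:=L) (cst a) (cst b))))) \/
  (exists (tau : LSterm L) (ks : list (Cidx R C)) (i : R) (j : C i),
      Forall SK ks /\ SK (existT _ i j) /\ SR i /\
      ks <> [] /\ Sorted (lex R ltR C ltC) ks /\ tbound tau <= length ks /\
      (forall k, In k ks -> ltR (projT1 k) i) /\
      phi = ltf (L:=L) (instc L R C ks tau) (cst (existT _ i j))) \/
  (exists (tau : LSterm L) (pre post : list (Cidx R C)) (iN p : R) (j : C p)
          (u : R) (ls : list (C u)),
      Forall SK (pre ++ post) /\ SK (existT _ p j) /\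
      Forall SK (map (fun l => existT _ u l) ls) /\ SR iN /\ SR p /\ SR u /\
      post <> [] /\ Sorted (lex R ltR C ltC) (pre ++ post) /\
      tbound tau <= length (pre ++ post) /\
      (forall k, In k post -> projT1 k = iN) /\
      (forall k, In k pre -> projT1 k <> iN) /\
      gt1 R ltR iN /\ is_pred R ltR p iN /\ (ltR iN u \/ u = iN) /\
      length ls = length post /\
      Sorted (lex R ltR C ltC) (pre ++ map (fun l => existT _ u l) ls) /\
      phi = imp (ltf (L:=L) (instc L R C (pre ++ post) tau) (cst (existT _ p j)))
                (eqf (instc L R C (pre ++ post) tau)
                     (instc L R C (pre ++ map (fun l => existT _ u l) ls) tau))).

Lemma Sigma1_on_mono SK SR SK' SR' phi : Sigma1_on SK SR phi ->
  (forall k, SK k -> SK' k) -> (forall r, SR r -> SR' r) -> Sigma1_on SK' SR' phi.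
Proof.
  intros H HK HR.
  destruct H as [H|[H|[H|H]]]; [left; exact H|right;left|right;right;left|right;right;right].
  - destruct H as [a [b [H1 [H2 H3]]]]. exists a, b; auto.
  - destruct H as [tau [ks [i [j [H1 [H2 [H3 H4]]]]]]]. exists tau, ks, i, j.
    split; [eapply Forall_impl; eauto|]. auto.
  - destruct H as [tau [pre [post [iN [p [j [u [ls [H1 [H2 [H3 [H4 [H5 [H6 H7]]]]]]]]]]]]]].
    exists tau, pre, post, iN, p, j, u, ls.
    split; [eapply Forall_impl; eauto|]. split; auto.
    split; [eapply Forall_impl; eauto|]. auto.
Qed.

Lemma Sigma1_finite_support phi : Sigma1 L ltR ltC phi ->
  exists KL RL, Sigma1_on (fun k => In k KL) (fun r => In r RL) phi.
Proof.
  intros [H|[H|[H|H]]].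
  - exists [], []. left; exact H.
  - destruct H as [a [b H]]. exists [a; b], []. right; left. exists a, b. simpl; auto.
  - destruct H as [tau [ks [i [j H]]]]. exists (existT _ i j :: ks), [i].
    right; right; left. exists tau, ks, i, j. split.
    + apply Forall_forall. simpl; auto.
    + simpl; auto.
  - destruct H as [tau [pre [post [iN [p [j [u [ls H]]]]]]]].
    exists (existT _ p j :: (pre ++ post) ++ map (fun l => existT _ u l) ls), [iN; p; u].
    right; right; right. exists tau, pre, post, iN, p, j, u, ls.
    split; [apply Forall_forall; intros; simpl; right; apply in_or_app; auto|].
    split; [simpl; auto|].
    split; [apply Forall_forall; intros; simpl; right; apply in_or_app; auto|].
    simpl; intuition.
Qed.

Lemma plus_Sigma1_finite_support G (l : list (LSKfm L (Cidx R C))) :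
  (forall p, In p l -> plus_theory G (Sigma1 L ltR ltC) p) ->
  exists KL RL, forall p, In p l ->
    plus_theory G (Sigma1_on (fun k => In k KL) (fun r => In r RL)) p.
Proof.
  induction l as [|p l IH]; intros H.
  - exists [], []. intros p [].
  - destruct IH as [KL [RL HKL]]; [intros; apply H; simpl; auto|].
    destruct (H p (or_introl eq_refl)) as [Hg|Hs].
    + exists KL, RL. intros q [<-|Hq]; auto. left; auto.
    + destruct (Sigma1_finite_support p Hs) as [KL' [RL' HW]].
      exists (KL ++ KL'), (RL ++ RL'). intros q [<-|Hq].
      * right. eapply Sigma1_on_mono; eauto; intros; apply in_or_app; auto.
      * destruct (HKL q Hq) as [?|W]; [left; auto|right].
        eapply Sigma1_on_mono; eauto; intros; apply in_or_app; auto.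
Qed.
End Support.

Section Relabel.
Variable L : lang.
Variables (R1 : Type) (ltR1 : R1 -> R1 -> Prop).
Variables (C1 : R1 -> Type) (ltC1 : forall i, C1 i -> C1 i -> Prop).
Variables (R2 : Type) (ltR2 : R2 -> R2 -> Prop).
Variables (C2 : R2 -> Type) (ltC2 : forall i, C2 i -> C2 i -> Prop).
Hypotheses (HwR1 : well_order ltR1) (HwC1 : forall i, well_order (ltC1 i)).
Hypotheses (HwR2 : well_order ltR2) (HwC2 : forall i, well_order (ltC2 i)).

(* [fr] relabels rows and [fc] columns; on the finite support they preserve
   every relation between indices that [Sigma1] can express. *)
Definition faithful_on (fr : R1 -> R2) (fc : forall i, C1 i -> C2 (fr i))
  (KL : list (Cidx R1 C1)) (RL : list R1) : Prop :=
  (forall r r', In r RL -> In r' RL -> ltR1 r r' -> ltR2 (fr r) (fr r')) /\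
  (forall r, In r RL -> gt1 R1 ltR1 r -> gt1 R2 ltR2 (fr r)) /\
  (forall r r', In r RL -> In r' RL -> is_pred R1 ltR1 r r' -> is_pred R2 ltR2 (fr r) (fr r')) /\
  (forall i x y, In (existT _ i x) KL -> In (existT _ i y) KL ->
     ltC1 i x y -> ltC2 (fr i) (fc i x) (fc i y)).

Section Map.
Variables (fr : R1 -> R2) (fc : forall i, C1 i -> C2 (fr i)).

Definition relabel_idx (k : Cidx R1 C1) : Cidx R2 C2 :=
  existT C2 (fr (projT1 k)) (fc (projT1 k) (projT2 k)).
Definition relabel_sym (s : symK L (Cidx R1 C1)) : symK L (Cidx R2 C2) :=
  match s with inl a => inl a | inr k => inr (relabel_idx k) end.

Lemma fmap_relabel_emb (p : LSfm L) : fmap relabel_sym (emb (K:=Cidx R1 C1) p) = emb p.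
Proof. unfold emb. rewrite fmap_fmap. reflexivity. Qed.

Lemma tmap_relabel_instc ks tau :
  tmap relabel_sym (instc L R1 C1 ks tau) = instc L R2 C2 (map relabel_idx ks) tau.
Proof.
  unfold instc. rewrite tmap_tsubst. unfold embt. rewrite tmap_tmap. simpl.
  f_equal. apply functional_extensionality. intros m. rewrite nth_error_map.
  destruct (nth_error ks m); reflexivity.
Qed.

Variables (KL : list (Cidx R1 C1)) (RL : list R1).
Hypothesis Hfaithful : faithful_on fr fc KL RL.
Hypothesis HKL : forall k, In k KL -> In (projT1 k) RL.

Lemma relabel_row_reflect r r' : In r RL -> In r' RL ->
  (ltR1 r r' <-> ltR2 (fr r) (fr r')) /\ (fr r = fr r' -> r = r').
Proof.
  apply (strict_mono_reflect R1 ltR1 HwR1 ltR2 (fun r => In r RL)).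
  - apply (wo_irr _ _ HwR2).
  - apply (wo_asym _ _ HwR2).
  - apply Hfaithful.
Qed.

Lemma relabel_col_reflect i x y :
  In (existT _ i x) KL -> In (existT _ i y) KL -> (ltC1 i x y <-> ltC2 (fr i) (fc i x) (fc i y)).
Proof.
  intros Hx Hy.
  apply (strict_mono_reflect (C1 i) (ltC1 i) (HwC1 i) (ltC2 (fr i))
           (fun x => In (existT _ i x) KL)); auto.
  - apply (wo_irr _ _ (HwC2 _)).
  - apply (wo_asym _ _ (HwC2 _)).
  - apply Hfaithful.
Qed.

Lemma lex_relabel a b : In a KL -> In b KL ->
  (lex R1 ltR1 C1 ltC1 a b <-> lex R2 ltR2 C2 ltC2 (relabel_idx a) (relabel_idx b)).
Proof.
  intros Ha Hb. destruct a as [ia xa], b as [ib xb].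
  destruct (classic (ia = ib)) as [<-|Hne].
  - unfold relabel_idx; simpl.
    rewrite !lex_same by (apply wo_irr; auto). apply relabel_col_reflect; auto.
  - pose proof (relabel_row_reflect ia ib (HKL _ Ha) (HKL _ Hb)) as [Hrow Hinj].
    unfold relabel_idx. rewrite !lex_diff by (simpl; auto). exact Hrow.
Qed.

Lemma Sorted_relabel l : Forall (fun k => In k KL) l -> Sorted (lex R1 ltR1 C1 ltC1) l ->
  Sorted (lex R2 ltR2 C2 ltC2) (map relabel_idx l).
Proof.
  intros HP HS. induction HS as [|a l HS IH Hhd]; simpl; constructor.
  - inversion HP; auto.
  - inversion HP as [|? ? Ha Hl]; subst. destruct Hhd as [|b l' Hab]; simpl; constructor.
    inversion Hl; subst. apply lex_relabel; auto.
Qed.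

Lemma Sigma1_on_relabel phi :
  Sigma1_on L R1 ltR1 C1 ltC1 (fun k => In k KL) (fun r => In r RL) phi ->
  Sigma1 L ltR2 ltC2 (fmap relabel_sym phi).
Proof.
  destruct Hfaithful as (_ & Hgt1 & Hpred & _).
  intros [H|[H|[H|H]]].
  - left. destruct H as [p [Hp ->]]. exists p. rewrite fmap_relabel_emb. auto.
  - right; left. destruct H as [a [b [Ha [Hb [[Hl ->]|[Hl ->]]]]]];
      exists (relabel_idx a), (relabel_idx b).
    + left. split; [apply lex_relabel; auto|reflexivity].
    + right. split; [rewrite <- lex_relabel; auto|reflexivity].
  - right; right; left.
    destruct H as (tau & ks & i & j & Hks & Hij & Hi & Hne & Hs & Htb & Hlt & ->).
    exists tau, (map relabel_idx ks), (fr i), (fc i j).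
    repeat match goal with |- _ /\ _ => split end.
    + destruct ks; simpl; congruence.
    + apply Sorted_relabel; auto.
    + rewrite length_map; auto.
    + intros k Hk. apply in_map_iff in Hk. destruct Hk as [k0 [<- Hk0]].
      rewrite Forall_forall in Hks. apply relabel_row_reflect; auto.
    + simpl. rewrite tmap_relabel_instc. reflexivity.
  - right; right; right.
    destruct H as (tau & pre & post & iN & p & j & u & ls & H1 & H2 & H3 & H4 & H5 & H6 & Hpo &
                   Hs & Htb & Hpost & Hpre & Hg & Hp & Hu & Hlen & Hs2 & ->).
    rewrite Forall_forall in H1, H3.
    exists tau, (map relabel_idx pre), (map relabel_idx post), (fr iN), (fr p), (fc p j),
      (fr u), (map (fc u) ls).
    repeat match goal with |- _ /\ _ => split end.
    + destruct post; simpl; congruence.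
    + rewrite <- map_app. apply Sorted_relabel, Hs. apply Forall_forall; auto.
    + rewrite <- map_app, length_map; auto.
    + intros k Hk. apply in_map_iff in Hk. destruct Hk as [k0 [<- Hk0]]. simpl.
      rewrite Hpost; auto.
    + intros k Hk E. apply in_map_iff in Hk. destruct Hk as [k0 [<- Hk0]]. simpl in E.
      apply (Hpre k0 Hk0). apply relabel_row_reflect; auto.
      apply HKL, H1, in_or_app; auto.
    + apply Hgt1; auto.
    + apply Hpred; auto.
    + destruct Hu as [Hu|<-]; [left; apply relabel_row_reflect; auto|right; reflexivity].
    + rewrite !length_map; auto.
    + replace (map _ (map (fc u) ls)) with (map relabel_idx (map (fun l => existT C1 u l) ls))
        by (rewrite !map_map; reflexivity).
      rewrite <- map_app. apply Sorted_relabel, Hs2. apply Forall_forall.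
      intros x Hx. apply in_app_or in Hx. destruct Hx; auto. apply H1, in_or_app; auto.
    + simpl. rewrite !tmap_relabel_instc, !map_app, !map_map. reflexivity.
Qed.
End Map.

Lemma consistent_plus_Sigma1_relabel G :
  (forall KL RL, exists fr fc, faithful_on fr fc KL RL) ->
  consistent (plus_theory G (Sigma1 L ltR2 ltC2)) ->
  consistent (plus_theory G (Sigma1 L ltR1 ltC1)).
Proof.
  intros Hrel. apply consistent_of_finite_renaming. intros l Hl.
  destruct (plus_Sigma1_finite_support L R1 ltR1 C1 ltC1 G l Hl) as [KL [RL HKL]].
  set (RL' := RL ++ map (@projT1 _ _) KL).
  assert (HKR : forall k, In k KL -> In (projT1 k) RL')
    by (intros k Hk; apply in_or_app; right; apply in_map; auto).
  destruct (Hrel KL RL') as [fr [fc Hf]].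
  exists (relabel_sym fr fc). intros p Hp.
  destruct (HKL p Hp) as [[q [Gq ->]]|W].
  - left. exists q. split; auto. apply fmap_relabel_emb.
  - right. apply (Sigma1_on_relabel fr fc KL RL'); auto.
    eapply Sigma1_on_mono; eauto. intros; apply in_or_app; auto.
Qed.
End Relabel.

(** * The initial omega-segment of a well-order *)

Section Chain.
Variables (A : Type) (lt : A -> A -> Prop) (Hwo : well_order lt) (ia : inhabited A).

Definition least (P : A -> Prop) : A :=
  epsilon ia (fun m => P m /\ forall y, P y -> ~ lt y m).

Lemma least_spec P : (exists x, P x) -> P (least P) /\ forall y, P y -> ~ lt y (least P).
Proof.
  intros [x Px]. unfold least. apply epsilon_spec. apply (wo_exists_least A lt Hwo P x Px).
Qed.

(* [chain n] is the n-th element of the well-order, as long as the first [n]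
   elements all have successors ([chain_succ_upto n]). *)
Fixpoint chain n : A :=
  match n with
  | 0 => least (fun _ => True)
  | S n => least (fun y => lt (chain n) y)
  end.

Definition chain_succ n := lt (chain n) (chain (S n)) /\
  forall z, ~ (lt (chain n) z /\ lt z (chain (S n))).

Definition chain_succ_upto n := forall k, k < n -> chain_succ k.

Lemma chain_succ_of n : (exists y, lt (chain n) y) -> chain_succ n.
Proof.
  intros H. destruct (least_spec _ H) as [H1 H2]. split; auto.
  intros z [Hz1 Hz2]. apply (H2 z Hz1 Hz2).
Qed.

Lemma chain0_least y : ~ lt y (chain 0).
Proof.
  destruct (least_spec (fun _ => True)) as [_ H].
  - destruct ia as [a]; exists a; auto.
  - intro; eapply H; eauto.
Qed.

Lemma chain_mono n : chain_succ_upto n -> forall i j, i < j -> j <= n -> lt (chain i) (chain j).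
Proof.
  intros Hv i j; induction j; intros Hij Hjn; [lia|].
  destruct (Nat.eq_dec i j) as [->|Ne].
  - apply (Hv j); lia.
  - eapply wo_trans; [exact Hwo|apply IHj; lia|]. apply (Hv j); lia.
Qed.

Lemma chain_initial n : chain_succ_upto n ->
  forall x, ~ lt (chain n) x -> In x (map chain (seq 0 (S n))).
Proof.
  intros Hv x Hx. apply in_map_iff.
  induction n as [|n IH].
  - exists 0. split; [|simpl; auto].
    destruct (wo_tri A lt Hwo x (chain 0)) as [H|[H|H]]; auto.
    + exfalso; eapply chain0_least; eauto.
    + contradiction.
  - destruct (wo_tri A lt Hwo x (chain (S n))) as [H|[H|H]];
      [|exists (S n); split; [auto|apply in_seq; lia]|contradiction].
    destruct (classic (lt (chain n) x)) as [H'|H'].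
    + exfalso. apply ((proj2 (Hv n ltac:(lia))) x). auto.
    + destruct IH as [i [Hi Hin]]; auto.
      * intros k Hk; apply Hv; lia.
      * exists i. apply in_seq in Hin. split; [auto|apply in_seq; lia].
Qed.

Lemma chain_succ_all_or_finite :
  (forall n, chain_succ_upto n) \/ exists n, forall x, In x (map chain (seq 0 (S n))).
Proof.
  destruct (classic (exists n, forall y, ~ lt (chain n) y)) as [[m Hm]|Hnomax].
  - right.
    destruct (wo_exists_least nat Nat.lt nat_well_order
                (fun n => forall y, ~ lt (chain n) y) m Hm) as [n [Hn Hmin]].
    exists n. intros x. apply chain_initial; auto.
    intros k Hk. apply chain_succ_of. apply NNPP. intros N.
    apply (Hmin k); auto. intros y Hy; apply N; eauto.
  - left. intros n k _. apply chain_succ_of. apply NNPP. intros N.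
    apply Hnomax. exists k. intros y Hy; apply N; eauto.
Qed.

Lemma chain_succ_upto_of_size n :
  (exists l : list A, NoDup l /\ S n <= length l) -> chain_succ_upto n.
Proof.
  induction n as [|n IH]; intros Hl; [intros k Hk; lia|].
  assert (Hv : chain_succ_upto n)
    by (apply IH; destruct Hl as [l [H1 H2]]; exists l; split; [auto|lia]).
  intros k Hk. destruct (Nat.eq_dec k n) as [->|Ne]; [|apply Hv; lia].
  apply chain_succ_of. apply NNPP. intros N.
  destruct Hl as [l [H1 H2]].
  assert (Hincl : incl l (map chain (seq 0 (S n)))).
  { intros x _. apply chain_initial; auto. intros Hx. apply N; eauto. }
  pose proof (NoDup_incl_length H1 Hincl) as X.
  rewrite length_map, length_seq in X. lia.
Qed.
End Chain.

(** * From eta-indexed to omega-indexed constants *)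

Fixpoint countP {A} (P : A -> Prop) (l : list A) : nat :=
  match l with
  | [] => 0
  | x :: l => (if excluded_middle_informative (P x) then 1 else 0) + countP P l
  end.

Lemma countP_mono {A} (P Q : A -> Prop) l :
  (forall x, In x l -> P x -> Q x) -> countP P l <= countP Q l.
Proof.
  induction l as [|a l IH]; simpl; intros H; auto.
  specialize (IH (fun x Hx => H x (or_intror Hx))).
  destruct (excluded_middle_informative (P a)), (excluded_middle_informative (Q a)); try lia.
  exfalso; eauto.
Qed.

Lemma countP_strict {A} (P Q : A -> Prop) l z : (forall x, In x l -> P x -> Q x) ->
  In z l -> Q z -> ~ P z -> countP P l < countP Q l.
Proof.
  induction l as [|a l IH]; simpl; intros H Hz Qz Pz; [contradiction|].
  destruct Hz as [<-|Hz].
  - pose proof (countP_mono P Q l (fun x Hx => H x (or_intror Hx))).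
    destruct (excluded_middle_informative (P a)), (excluded_middle_informative (Q a));
      try contradiction; lia.
  - specialize (IH (fun x Hx => H x (or_intror Hx)) Hz Qz Pz).
    destruct (excluded_middle_informative (P a)), (excluded_middle_informative (Q a)); try lia.
    exfalso; eauto.
Qed.

Lemma countP_succ {A} (P Q : A -> Prop) l z : NoDup l -> In z l ->
  (forall x, In x l -> x <> z -> (Q x <-> P x)) -> Q z -> ~ P z -> countP Q l = S (countP P l).
Proof.
  intros Hnd Hz HPQ Qz Pz. induction l as [|a l IH]; simpl; [contradiction|].
  inversion Hnd as [|? ? Ha Hl]; subst.
  destruct Hz as [<-|Hz].
  - assert (countP Q l = countP P l).
    { apply Nat.le_antisymm; apply countP_mono; intros x Hx;
        apply HPQ; simpl; auto; intros ->; contradiction. }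
    destruct (excluded_middle_informative (Q a)), (excluded_middle_informative (P a));
      try contradiction; lia.
  - rewrite IH; auto; [|intros x Hx; apply HPQ; simpl; auto].
    assert (Haz : a <> z) by (intros ->; contradiction).
    pose proof (HPQ a (or_introl eq_refl) Haz).
    destruct (excluded_middle_informative (Q a)), (excluded_middle_informative (P a));
      tauto || lia.
Qed.

(* Rows go to 2 + (number of smaller support rows), so an immediate
   successor within the support goes to the next natural number; columns of a
   row go to their rank among the support columns of that row. *)
Lemma faithful_into_omega R ltR C ltC (HwR : well_order ltR) (HwC : forall i, well_order (ltC i))
  (KL : list (Cidx R C)) (RL : list R) :
  exists fr fc, faithful_on R ltR C ltC nat Nat.lt (fun _ => nat) (fun _ => Nat.lt) fr fc KL RL.
Proof.
  set (RLn := nodup (fun x y => excluded_middle_informative (x = y)) RL).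
  assert (HIn : forall r, In r RL <-> In r RLn) by (intros; unfold RLn; rewrite nodup_In; tauto).
  set (fr := fun r => 2 + countP (fun s => ltR s r) RLn).
  set (fc := fun i (c : C i) => countP (fun k => exists y, k = existT C i y /\ ltC i y c) KL).
  exists fr, fc. split; [|split; [|split]].
  - intros r r' Hr _ H. unfold fr.
    enough (countP (fun s => ltR s r) RLn < countP (fun s => ltR s r') RLn) by lia.
    apply (countP_strict _ _ RLn r).
    + intros x _ Hx. eapply wo_trans; eauto.
    + apply HIn; auto.
    + exact H.
    + apply wo_irr; auto.
  - intros r _ _. exists 0, 1. unfold fr. lia.
  - intros r r' Hr _ [Hlt Hnone].
    assert (Hsucc : fr r' = S (fr r)).
    { unfold fr. rewrite (countP_succ (fun s => ltR s r) (fun s => ltR s r') RLn r);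
        [lia|apply NoDup_nodup|apply HIn; auto| |auto|apply wo_irr; auto].
      intros x _ Hx. split.
      - intros H. destruct (wo_tri _ _ HwR x r) as [X|[X|X]]; [auto|contradiction|].
        exfalso; apply (Hnone x); auto.
      - intros H; eapply wo_trans; eauto. }
    rewrite Hsucc. split; [lia|]. intros z [Z1 Z2]; lia.
  - intros i x y Hx _ Hxy. unfold fc.
    apply (countP_strict _ _ KL (existT C i x)); auto.
    + intros k _ [y0 [-> Hy0]]. exists y0; split; auto. eapply wo_trans; eauto.
    + exists x; split; auto.
    + intros [y0 [E H0]]. apply inj_pair2 in E. subst. exact (wo_irr _ _ (HwC i) _ H0).
Qed.

(* Hilbert's hotel: shift an omega-sequence avoiding [a] one step forward and
   send [a] to its first element. *)
Lemma equinum_remove_point A (P : A -> Prop) a :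
  inj nat A -> (forall x, P x <-> x <> a) -> equinum A {x | P x}.
Proof.
  intros [f Hf] HP.
  assert (Hg : exists g : nat -> A, (forall m n, g m = g n -> m = n) /\ forall n, g n <> a).
  { destruct (classic (exists m, f m = a)) as [[m Hm]|Hm].
    - exists (fun n => f (S m + n)). split.
      + intros x y E. apply Hf in E. lia.
      + intros n E. rewrite <- Hm in E. apply Hf in E. lia.
    - exists f. split; [exact Hf|]. intros n E. apply Hm; eauto. }
  destruct Hg as [g [Hginj Hga]].
  set (idx := fun x => epsilon (inhabits 0) (fun n => g n = x)).
  assert (Hidx : forall n, idx (g n) = n)
    by (intros n; apply Hginj, (epsilon_spec (inhabits 0) (fun m => g m = g n)); eauto).
  set (F := fun x => if excluded_middle_informative (x = a) then g 0
           else if excluded_middle_informative (exists n, g n = x) then g (S (idx x)) else x).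
  assert (Fa : F a = g 0)
    by (unfold F; destruct (excluded_middle_informative (a = a)); congruence).
  assert (Fg : forall n, F (g n) = g (S n)).
  { intros n. unfold F. rewrite Hidx.
    destruct (excluded_middle_informative (g n = a)); [exfalso; eapply Hga; eauto|].
    destruct (excluded_middle_informative (exists m, g m = g n)); [auto|exfalso; eauto]. }
  assert (Foff : forall x, x <> a -> (forall n, g n <> x) -> F x = x).
  { intros x Hxa Hx. unfold F.
    destruct (excluded_middle_informative (x = a)); [contradiction|].
    destruct (excluded_middle_informative (exists m, g m = x)) as [[m Hm]|]; auto.
    exfalso; eapply Hx; eauto. }
  assert (Hcases : forall x, x = a \/ (exists n, x = g n) \/ (x <> a /\ forall n, g n <> x)).
  { intros x. destruct (classic (x = a)); auto.
    destruct (classic (exists n, x = g n)); auto. right; right; split; auto.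
    intros n E. eauto. }
  assert (HFa : forall x, F x <> a).
  { intros x. destruct (Hcases x) as [->|[[n ->]|[Hxa Hx]]];
      rewrite ?Fa, ?Fg, ?Foff; auto. }
  exists (fun x => exist P (F x) (proj2 (HP _) (HFa x))). split.
  - intros x y E. apply (f_equal (@proj1_sig _ _)) in E. simpl in E.
    destruct (Hcases x) as [->|[[n ->]|[Hxa Hx]]], (Hcases y) as [->|[[m ->]|[Hya Hy]]];
      rewrite ?Fa, ?Fg, ?Foff in E; auto;
      try (apply Hginj in E; congruence);
      exfalso; solve [eapply Hx; eauto using eq_sym|eapply Hy; eauto using eq_sym].
  - intros [y Hy].
    assert (Hpre : exists x, F x = y).
    { apply HP in Hy.
      destruct (Hcases y) as [->|[[[|n] ->]|[Hya Hyg]]]; [contradiction|eauto|eauto|].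
      exists y. apply Foff; auto. }
    destruct Hpre as [x Hx]. exists x.
    apply eq_sig_hprop; [intros; apply proof_irrelevance|exact Hx].
Qed.

Lemma cardinal_no_max A (lt : A -> A -> Prop) :
  is_cardinal lt -> inj nat A -> forall a, exists y, lt a y.
Proof.
  intros [Hwo Hc] Hinf a. apply NNPP; intros N. apply (Hc a).
  apply (equinum_remove_point _ _ a Hinf). intros x; split.
  - intros H ->. exact (wo_irr _ _ Hwo _ H).
  - intros Hx. destruct (wo_tri _ _ Hwo x a) as [H|[H|H]]; [auto|contradiction|].
    exfalso; apply N; eauto.
Qed.

(* If eta were finite, the image of a cofinal map from eta would have a
   largest element, which would then be the largest element of lambda. *)
Lemma cofinality_chain_succ Lam (ltL : Lam -> Lam -> Prop) E (ltE : E -> E -> Prop) :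
  singular_cardinal ltL ltE ->
  well_order ltE /\ exists ie : inhabited E, forall n, chain_succ_upto E ltE ie n.
Proof.
  intros [HcL [Hinf [[HcE [[h Hh] _]] _]]].
  assert (HwE : well_order ltE) by apply HcE.
  assert (HwL : well_order ltL) by apply HcL.
  split; auto.
  destruct Hinf as [f Hf].
  destruct (Hh (f 0)) as [y0 [[e _] _]].
  exists (inhabits e).
  destruct (chain_succ_all_or_finite E ltE HwE (inhabits e)) as [Hv|[n Hcov]]; [exact Hv|].
  exfalso.
  destruct (wo_exists_max_in_list Lam ltL HwL
              (map h (map (chain E ltE (inhabits e)) (seq 0 (S n)))))
    as [m [_ Hmax]]; [simpl; congruence|].
  destruct (cardinal_no_max Lam ltL HcL (ex_intro _ f Hf) m) as [y Hy].
  destruct (Hh y) as [w [[e' <-] Hw]].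
  assert (Hme : ltL m (h e')) by (destruct Hw as [Hw| <-]; [eapply wo_trans; eauto|auto]).
  destruct (Hmax (h e') (in_map h _ _ (Hcov e'))) as [E1|E1].
  - rewrite E1 in Hme. exact (wo_irr _ _ HwL _ Hme).
  - exact (wo_asym _ _ HwL _ _ Hme E1).
Qed.

Lemma card_lt_list_succ A B n : card_lt A B ->
  (exists l : list A, NoDup l /\ length l = n) -> exists l : list B, NoDup l /\ length l = S n.
Proof.
  intros [[f Hf] Hn] [l [Hl Hlen]].
  destruct (classic (exists b, ~ In b (map f l))) as [[b Hb]|N].
  - exists (b :: map f l). split.
    + constructor; auto. apply Injective_map_NoDup; auto.
    + simpl; rewrite length_map; auto.
  - exfalso. apply Hn.
    assert (H : forall b, exists a, In a l /\ f a = b).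
    { intros b. apply NNPP. intro N'. apply N. exists b. intro Hb. apply in_map_iff in Hb.
      destruct Hb as [a [E Ha]]. apply N'. eauto. }
    exists (fun b => proj1_sig (constructive_indefinite_description _ (H b))).
    intros x y E.
    destruct (proj2_sig (constructive_indefinite_description _ (H x))) as [_ Ex].
    destruct (proj2_sig (constructive_indefinite_description _ (H y))) as [_ Ey].
    rewrite <- Ex, <- Ey, E. reflexivity.
Qed.

Lemma increasing_card_along_chain E (ltE : E -> E -> Prop) M ie
  (Hinc : forall i i', ltE i i' -> card_lt (M i) (M i'))
  (Hv : forall n, chain_succ_upto E ltE ie n) :
  forall n, exists l : list (M (chain E ltE ie n)), NoDup l /\ length l = n.
Proof.
  induction n.
  - exists []. split; [constructor|auto].
  - apply (card_lt_list_succ (M (chain E ltE ie n))); auto.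
    apply Hinc, (Hv (S n) n). lia.
Qed.

(** * From omega-indexed to eta-indexed constants *)

(* Row n goes to the (N+2+n)-th element of eta, where N bounds the support
   columns: then it has two predecessors and mu of it has more than N
   elements, so columns can go to the first N elements of that cardinal. *)
Lemma faithful_from_omega E (ltE : E -> E -> Prop) M (ltM : forall i, M i -> M i -> Prop)
  (HwE : well_order ltE) (HwM : forall i, well_order (ltM i)) (ie : inhabited E)
  (Hv : forall n, chain_succ_upto E ltE ie n)
  (Hsize : forall n, exists l : list (M (chain E ltE ie n)), NoDup l /\ length l = n)
  (KL : list (Cidx nat (fun _ => nat))) (RL : list nat) :
  exists fr fc, faithful_on nat Nat.lt (fun _ => nat) (fun _ => Nat.lt) E ltE M ltM fr fc KL RL.
Proof.
  set (cols := map (fun k : Cidx nat (fun _ => nat) => projT2 k) KL).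
  set (N := S (list_max cols)).
  assert (HN : forall k, In k KL -> projT2 k < N).
  { intros k Hk. pose proof (proj1 (list_max_le cols _) (le_n _)) as Hall.
    rewrite Forall_forall in Hall. enough (projT2 k <= list_max cols) by (unfold N; lia).
    apply Hall, in_map; auto. }
  set (fr := fun n => chain E ltE ie (N + 2 + n)).
  assert (inhM : forall n, inhabited (M (fr n))).
  { intros n. destruct (Hsize (N + 2 + n)) as [[|a l] [_ Hl]]; [simpl in Hl; lia|].
    constructor; exact a. }
  set (fc := fun n (c : nat) => chain (M (fr n)) (ltM (fr n)) (inhM n) c).
  assert (HvM : forall n, chain_succ_upto (M (fr n)) (ltM (fr n)) (inhM n) N).
  { intros n. apply (chain_succ_upto_of_size _ _ (HwM (fr n))).
    destruct (Hsize (N + 2 + n)) as [l [H1 H2]]. exists l; split; [exact H1|].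
    unfold fr. rewrite H2; lia. }
  exists fr, fc. split; [|split; [|split]].
  - intros r r' _ _ H. apply (chain_mono E ltE HwE ie (N + 2 + r') (Hv _)); lia.
  - intros r _ _. exists (chain E ltE ie 0), (chain E ltE ie 1). split.
    + apply (chain_mono E ltE HwE ie 1 (Hv _)); lia.
    + apply (chain_mono E ltE HwE ie (N + 2 + r) (Hv _)); lia.
  - intros r r' _ _ [H1 H2].
    assert (r' = S r) as ->
      by (destruct (Nat.eq_dec r' (S r)); auto; exfalso; apply (H2 (S r)); lia).
    unfold fr. replace (N + 2 + S r) with (S (N + 2 + r)) by lia.
    exact (Hv _ _ (Nat.lt_succ_diag_r _)).
  - intros i x y Hx Hy Hxy. apply HN in Hy. simpl in Hy.
    apply (chain_mono _ _ (HwM (fr i)) (inhM i) N (HvM i)); lia.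
Qed.

Theorem lemma3p1 (L : lang)
  (Lam : Type) (ltL : Lam -> Lam -> Prop)                 (* lambda *)
  (E : Type) (ltE : E -> E -> Prop)                       (* eta = cf(lambda) *)
  (M : E -> Type) (ltM : forall i, M i -> M i -> Prop)    (* mu_i, i < eta *)
  (Hlam : singular_cardinal ltL ltE)
  (Hmu : increasing_seq_with_limit ltE M ltM Lam)
  (G : LSfm L -> Prop) (HG : LS_theory G) :
  consistent (plus_theory G (Sigma1 L ltE ltM)) <->
  consistent (plus_theory G (Sigma1_star L)).
Proof.
  destruct (cofinality_chain_succ Lam ltL E ltE Hlam) as [HwE [ie Hv]].
  destruct Hmu as [HcM [Hinc _]].
  assert (HwM : forall i, well_order (ltM i)) by (intros i; apply HcM).
  pose proof (increasing_card_along_chain E ltE M ie Hinc Hv) as Hsize.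
  split.
  - apply consistent_plus_Sigma1_relabel; auto using nat_well_order.
    intros KL RL. exact (faithful_from_omega E ltE M ltM HwE HwM ie Hv Hsize KL RL).
  - apply consistent_plus_Sigma1_relabel; auto using nat_well_order.
    intros KL RL. apply faithful_into_omega; auto.
Qed.
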